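(* Let $A=\{a_n\}_{n\in\mathbb Z}\subset\mathbb R$ be an almost periodic set with $0\notin A$, enumerated so that $a_n\le a_{n+1}$ for all $n$. Then the finite limit $$\alpha_0=\lim_{N\to\infty}\sum_{|a_n|<N}\frac1{a_n}$$ exists, and for every $z\in\mathbb C\setminus A$ the series $$\alpha_z=\frac1{z-a_0}+\sum_{n=1}^\infty\left[\frac1{z-a_n}+\frac1{z-a_{-n}}\right]$$ converges absolutely.
   Context: A discrete locally finite multiset $A=\{a_n\}_{n\in\mathbb Z}\subset\mathbb R$ (a point may occur several times in the sequence) is called almost periodic if for every $\varepsilon>0$ the set $$E_\varepsilon=\{\tau\in\mathbb R:\ \exists\text{ a bijection }\sigma:\mathbb Z\to\mathbb Z\text{ with }\sup_n|a_n+\tau-a_{\sigma(n)}|<\varepsilon\}$$ is relatively dense, i.e. there is $L_\varepsilon>0$ with $E_\varepsilon\cap(x,x+L_\varepsilon)\ne\emptyset$ for every $x\in\mathbb R$. *)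

From Stdlib Require Import Reals ZArith.
From Coquelicot Require Import Coquelicot.
Open Scope R_scope.

(* A multiset {a_n}_{n in Z} of reals is given as a sequence a : Z -> R. *)

Definition locally_finite (a : Z -> R) : Prop :=
  forall M : R, exists K : nat,
    forall n : Z, Rabs (a n) <= M -> (Z.abs n <= Z.of_nat K)%Z.

Definition bijective_Z (s : Z -> Z) : Prop :=
  exists g : Z -> Z, (forall n, g (s n) = n) /\ (forall n, s (g n) = n).

Definition eps_almost_period (a : Z -> R) (eps tau : R) : Prop :=
  exists sigma : Z -> Z, bijective_Z sigma /\
    exists M : R, M < eps /\
      forall n : Z, Rabs (a n + tau - a (sigma n)) <= M.

Definition relatively_dense (E : R -> Prop) : Prop :=
  exists L : R, 0 < L /\ forall x : R, exists tau, E tau /\ x < tau < x + L.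

Definition almost_periodic_set (a : Z -> R) : Prop :=
  locally_finite a /\
  forall eps : R, 0 < eps -> relatively_dense (eps_almost_period a eps).

Definition window_sum (a : Z -> R) (N : R) (K : nat) : R :=
  sum_f_R0 (fun i : nat =>
      let n := (Z.of_nat i - Z.of_nat K)%Z in
      if Rlt_dec (Rabs (a n)) N then / a n else 0) (2 * K).

(* s = sum_{|a_n| < N} 1/a_n : the (finite) sum over all indices n with
   |a_n| < N, computed over any window [-K, K] containing all those n. *)
Definition recip_sum_is (a : Z -> R) (N s : R) : Prop :=
  exists K : nat,
    (forall n : Z, Rabs (a n) < N -> (Z.abs n <= Z.of_nat K)%Z) /\
    s = window_sum a N K.

Definition pair_term (a : Z -> R) (z : C) (n : Z) : C :=
  Cplus (Cinv (Cminus z (RtoC (a n)))) (Cinv (Cminus z (RtoC (a (- n)%Z)))).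

From Stdlib Require Import Reals ZArith List Lia Lra Classical.
From Coquelicot Require Import Coquelicot.
Open Scope R_scope.

(* Almost periodicity with tolerance 1 gives relatively dense translations tau, each with a
   bijection sigma of the indices such that a_n + tau is within 1 of a_(sigma n). Since A is
   locally finite and enumerated monotonically, an interval of fixed length contains boundedly
   many a_n; hence the gaps are bounded, a_n grows at least linearly in n, and every such sigma
   is a shift up to a bounded error. Taking a_0 + tau just below a_n, sigma sends 0 near n and
   therefore -n near 0, which gives |a_n + a_(-n) - 2 a_0| <= B. Consequently
   1/(z - a_n) + 1/(z - a_(-n)) = O(1/n^2), and at z = 0 the series of 1/a_n + 1/a_(-n)
   converges absolutely. A window sum over |a_n| < N differs from a partial sum of that series
   by a tail and by the unpaired terms with a_n or a_(-n) near +-N, which are boundedly many and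
   each at most 1/N. *)

Lemma injective_interval_width (g : Z -> Z) (n : nat) (u v : Z) :
  (forall t t', g t = g t' -> t = t') ->
  (forall t, (0 <= t <= Z.of_nat n)%Z -> (u <= g t <= v)%Z) ->
  (Z.of_nat n <= v - u)%Z.
Proof.
  intros Hinj Hrange.
  set (dom := map (fun k => g (Z.of_nat k)) (seq 0 (S n))).
  set (cod := map (fun k => (u + Z.of_nat k)%Z) (seq 0 (Z.to_nat (v - u + 1)))).
  assert (Hdom : NoDup dom).
  { apply NoDup_map_NoDup_ForallPairs; [|apply seq_NoDup].
    intros x y _ _ E. apply Hinj in E. lia. }
  assert (Hincl : incl dom cod).
  { intros y Hy. apply in_map_iff in Hy as [k [<- Hk]]. apply in_seq in Hk.
    assert (Hgk := Hrange (Z.of_nat k) ltac:(lia)).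
    apply in_map_iff. exists (Z.to_nat (g (Z.of_nat k) - u)). split; [lia|].
    apply in_seq. lia. }
  assert (Hlen := NoDup_incl_length Hdom Hincl).
  unfold dom, cod in Hlen. rewrite !length_map, !length_seq in Hlen. lia.
Qed.

Definition unit_periods_dense (a : Z -> R) (L : R) : Prop :=
  forall x, exists tau sigma, x < tau < x + L /\ bijective_Z sigma /\
    forall n, Rabs (a n + tau - a (sigma n)) <= 1.

Lemma unit_periods_dense_of_ap (a : Z -> R) :
  almost_periodic_set a -> exists L, unit_periods_dense a L.
Proof.
  intros [_ Hap]. destruct (Hap 1 Rlt_0_1) as [L [_ Hdense]].
  exists L. intros x.
  destruct (Hdense x) as [tau [[sigma [Hbij [M [HM Hclose]]]] Htau]].
  exists tau, sigma. repeat split; try lra; auto.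
  intros n. specialize (Hclose n). lra.
Qed.

Section Nondecreasing.

Variable a : Z -> R.
Hypothesis a_nondecr : forall n, a n <= a (n + 1)%Z.

Lemma nondecr_le i j : (i <= j)%Z -> a i <= a j.
Proof.
  intros Hij. replace j with (i + Z.of_nat (Z.to_nat (j - i)))%Z by lia.
  induction (Z.to_nat (j - i)) as [|d IH].
  - rewrite Z.add_0_r. lra.
  - replace (i + Z.of_nat (S d))%Z with (i + Z.of_nat d + 1)%Z by lia.
    specialize (a_nondecr (i + Z.of_nat d)). lra.
Qed.

Lemma dist_le_gap_mul (G : R) :
  (forall j, a (j + 1)%Z - a j <= G) ->
  forall i j, Rabs (a j - a i) <= G * IZR (Z.abs (j - i)).
Proof.
  intros Hgap.
  assert (Hup : forall i (d : nat), a (i + Z.of_nat d)%Z - a i <= G * INR d).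
  { intros i d. induction d as [|d IH].
    - rewrite Z.add_0_r. simpl. lra.
    - replace (i + Z.of_nat (S d))%Z with (i + Z.of_nat d + 1)%Z by lia.
      specialize (Hgap (i + Z.of_nat d)%Z). rewrite S_INR. lra. }
  assert (Hle : forall i j, (i <= j)%Z -> Rabs (a j - a i) <= G * IZR (Z.abs (j - i))).
  { intros i j Hij. assert (Hd := Hup i (Z.to_nat (j - i))).
    replace (i + Z.of_nat (Z.to_nat (j - i)))%Z with j in Hd by lia.
    rewrite INR_IZR_INZ, Z2Nat.id in Hd by lia.
    rewrite Z.abs_eq by lia. assert (Hm := nondecr_le i j Hij).
    rewrite Rabs_right by lra. lra. }
  intros i j. destruct (Z_le_gt_dec i j) as [Hij|Hij]; [auto|].
  rewrite Rabs_minus_sym, <- Z.abs_opp. replace (- (j - i))%Z with (i - j)%Z by lia.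
  apply Hle. lia.
Qed.

Section BoundedDensity.

Variable C : nat.
Hypothesis index_gap : forall i j, (i <= j)%Z -> a j - a i <= 2 -> (j - i <= Z.of_nat C)%Z.

Lemma linear_growth (n : nat) i : INR n / INR (S C) - 1 <= a (i + Z.of_nat n)%Z - a i.
Proof.
  revert i. induction n as [n IH] using (well_founded_induction lt_wf). intros i.
  assert (HSC : 0 < INR (S C)) by (apply lt_0_INR; lia).
  destruct (le_lt_dec n C) as [Hn|Hn].
  - assert (Hm := nondecr_le i (i + Z.of_nat n)%Z ltac:(lia)).
    assert (INR n / INR (S C) <= 1).
    { apply (Rdiv_le_1 _ _ HSC). apply le_INR. lia. }
    lra.
  - assert (IHn := IH (n - S C)%nat ltac:(lia) i).
    rewrite minus_INR in IHn by lia.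
    replace ((INR n - INR (S C)) / INR (S C)) with (INR n / INR (S C) - 1) in IHn
      by (field; lra).
    assert (Hstep : 1 < a (i + Z.of_nat n)%Z - a (i + Z.of_nat (n - S C))%Z).
    { apply Rnot_le_lt. intros Hle.
      assert (Hidx := index_gap (i + Z.of_nat (n - S C))%Z (i + Z.of_nat n)%Z
                        ltac:(lia) ltac:(lra)).
      lia. }
    lra.
Qed.

Lemma near_shift_lower (rho g : Z -> Z) (t : R) :
  (forall n, g (rho n) = n) -> (forall j, Rabs (a j + t - a (rho j)) <= 1) ->
  forall i n, (0 <= n)%Z -> (n - 2 * Z.of_nat C <= rho (i + n) - rho i)%Z.
Proof.
  intros Hg Hclose i n Hn.
  assert (Hw := injective_interval_width (fun s => rho (i + s)%Z) (Z.to_nat n)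
                  (rho i - Z.of_nat C)%Z (rho (i + n) + Z.of_nat C)%Z).
  enough (Z.of_nat (Z.to_nat n) <= rho (i + n) + Z.of_nat C - (rho i - Z.of_nat C))%Z by lia.
  apply Hw.
  { intros s s' E. apply (f_equal g) in E. rewrite !Hg in E. lia. }
  intros s Hs. cbv beta.
  assert (H0 := proj1 (Rabs_le_between _ _) (Hclose i)).
  assert (Hs' := proj1 (Rabs_le_between _ _) (Hclose (i + s)%Z)).
  assert (Hn' := proj1 (Rabs_le_between _ _) (Hclose (i + n)%Z)).
  assert (M1 := nondecr_le i (i + s)%Z ltac:(lia)).
  assert (M2 := nondecr_le (i + s)%Z (i + n)%Z ltac:(lia)).
  split.
  - destruct (Z_le_gt_dec (rho i) (rho (i + s)%Z)) as [E|E]; [lia|].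
    assert (M := nondecr_le (rho (i + s)%Z) (rho i) ltac:(lia)).
    assert (Hidx := index_gap (rho (i + s)%Z) (rho i) ltac:(lia) ltac:(lra)). lia.
  - destruct (Z_le_gt_dec (rho (i + s)%Z) (rho (i + n)%Z)) as [E|E]; [lia|].
    assert (M := nondecr_le (rho (i + n)%Z) (rho (i + s)%Z) ltac:(lia)).
    assert (Hidx := index_gap (rho (i + n)%Z) (rho (i + s)%Z) ltac:(lia) ltac:(lra)). lia.
Qed.

Lemma near_shift (sigma : Z -> Z) (tau : R) :
  bijective_Z sigma -> (forall j, Rabs (a j + tau - a (sigma j)) <= 1) ->
  forall i j, (Z.abs (sigma j - sigma i - (j - i)) <= 2 * Z.of_nat C)%Z.
Proof.
  intros [g [Hg1 Hg2]] Hclose.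
  assert (Hclose' : forall m, Rabs (a m + - tau - a (g m)) <= 1).
  { intros m. rewrite <- Rabs_Ropp. specialize (Hclose (g m)). rewrite Hg2 in Hclose.
    replace (- (a m + - tau - a (g m))) with (a (g m) + tau - a m) by ring. exact Hclose. }
  assert (Hfwd := near_shift_lower sigma g tau Hg1 Hclose).
  assert (Hbwd := near_shift_lower g sigma (- tau) Hg2 Hclose').
  assert (Hle : forall i j, (i <= j)%Z -> (Z.abs (sigma j - sigma i - (j - i)) <= 2 * Z.of_nat C)%Z).
  { intros i j Hij.
    assert (Hf := Hfwd i (j - i)%Z ltac:(lia)). replace (i + (j - i))%Z with j in Hf by lia.
    destruct (Z_le_gt_dec (sigma j - sigma i) (j - i + 2 * Z.of_nat C)) as [E|E]; [lia|].
    assert (Hb := Hbwd (sigma i) (sigma j - sigma i)%Z ltac:(lia)).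
    replace (sigma i + (sigma j - sigma i))%Z with (sigma j) in Hb by lia.
    rewrite !Hg1 in Hb. lia. }
  intros i j. destruct (Z_le_gt_dec i j) as [Hij|Hij]; [auto|].
  assert (Hji := Hle j i ltac:(lia)). lia.
Qed.

End BoundedDensity.

Section AlmostPeriodic.

Variable L : R.
Hypothesis a_lf : locally_finite a.
Hypothesis a_periods : unit_periods_dense a L.

Lemma gap_le j : a (j + 1)%Z - a j <= L + 2.
Proof.
  apply Rnot_lt_le. intros Hbig.
  destruct (a_periods (a j + 1 - a 0%Z)) as [tau [sigma [Htau [_ Hclose]]]].
  assert (H0 := proj1 (Rabs_le_between _ _) (Hclose 0%Z)).
  destruct (Z_le_gt_dec (sigma 0%Z) j) as [Hs|Hs].
  - assert (M := nondecr_le _ _ Hs). lra.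
  - assert (M := nondecr_le (j + 1)%Z (sigma 0%Z) ltac:(lia)). lra.
Qed.

(* A translation tau close to -a_i moves a_i, ..., a_j into a fixed bounded interval, which
   by local finiteness contains the images of boundedly many indices. *)
Lemma index_gap_bounded (R0 : R) :
  exists C, forall i j, (i <= j)%Z -> a j - a i <= R0 -> (j - i <= Z.of_nat C)%Z.
Proof.
  destruct (a_lf (L + Rabs R0 + 1)) as [K HK].
  exists (2 * K)%nat. intros i j Hij Hd.
  destruct (a_periods (- a i - L)) as [tau [sigma [Htau [[g [Hg1 _]] Hclose]]]].
  assert (Hw := injective_interval_width (fun t => sigma (i + t)%Z) (Z.to_nat (j - i))
                  (- Z.of_nat K) (Z.of_nat K)).
  enough (Z.of_nat (Z.to_nat (j - i)) <= Z.of_nat K - - Z.of_nat K)%Z by lia.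
  apply Hw.
  { intros t t' E. apply (f_equal g) in E. rewrite !Hg1 in E. lia. }
  intros t Ht. cbv beta.
  enough (Rabs (a (sigma (i + t)%Z)) <= L + Rabs R0 + 1) as Hin by (apply HK in Hin; lia).
  assert (Hc := proj1 (Rabs_le_between _ _) (Hclose (i + t)%Z)).
  assert (M1 := nondecr_le i (i + t)%Z ltac:(lia)).
  assert (M2 := nondecr_le (i + t)%Z j ltac:(lia)).
  assert (R0 <= Rabs R0) by apply Rle_abs.
  apply Rabs_le_between. lra.
Qed.

Lemma index_dist_bounded (R0 : R) :
  exists C, forall i j, Rabs (a j - a i) <= R0 -> (Z.abs (j - i) <= Z.of_nat C)%Z.
Proof.
  destruct (index_gap_bounded R0) as [C HC]. exists C.
  intros i j Hd. apply Rabs_le_between in Hd.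
  destruct (Z_le_gt_dec i j) as [Hij|Hij].
  - assert (Hidx := HC i j Hij ltac:(lra)). lia.
  - assert (Hidx := HC j i ltac:(lia) ltac:(lra)). lia.
Qed.

Lemma symmetric_deviation_bounded :
  exists B, forall n, Rabs (a n + a (- n)%Z - 2 * a 0%Z) <= B.
Proof.
  destruct (index_dist_bounded (L + 1)) as [C1 HC1].
  destruct (index_gap_bounded 2) as [C2 HC2].
  assert (HL : 0 <= L + 2).
  { assert (G := gap_le 0). assert (M := a_nondecr 0). lra. }
  exists ((L + 2) * IZR (Z.of_nat C1 + 2 * Z.of_nat C2) + 1 + L). intros n.
  destruct (a_periods (a n - a 0%Z - L)) as [tau [sigma [Htau [Hbij Hclose]]]].
  assert (H0 := proj1 (Rabs_le_between _ _) (Hclose 0%Z)).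
  assert (Hn := proj1 (Rabs_le_between _ _) (Hclose (- n)%Z)).
  assert (Hs0 : (Z.abs (sigma 0%Z - n) <= Z.of_nat C1)%Z).
  { apply HC1. apply Rabs_le_between. lra. }
  assert (Hshift := near_shift C2 HC2 sigma tau Hbij Hclose 0%Z (- n)%Z).
  assert (Hsn : (Z.abs (sigma (- n)%Z - 0) <= Z.of_nat C1 + 2 * Z.of_nat C2)%Z) by lia.
  apply IZR_le in Hsn.
  assert (Hlip := dist_le_gap_mul (L + 2) gap_le 0%Z (sigma (- n)%Z)).
  apply Rabs_le_between in Hlip.
  assert (Hmul := Rmult_le_compat_l _ _ _ HL Hsn).
  apply Rabs_le_between. lra.
Qed.

Lemma linear_growth_rate :
  exists c, 0 < c /\ forall (n : nat) i, INR n * c - 1 <= a (i + Z.of_nat n)%Z - a i.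
Proof.
  destruct (index_gap_bounded 2) as [C HC].
  exists (/ INR (S C)). split.
  - apply Rinv_0_lt_compat, lt_0_INR. lia.
  - exact (linear_growth C HC).
Qed.

End AlmostPeriodic.

End Nondecreasing.

Lemma inv_sq_partial_le (N : nat) :
  sum_f_R0 (fun k => / INR (S k) ^ 2) N <= 2 - / INR (S N).
Proof.
  induction N as [|N IH]; [simpl; lra|].
  rewrite tech5, (S_INR (S N)).
  assert (Hx : 0 < INR (S N)) by (apply lt_0_INR; lia).
  set (x := INR (S N)) in *.
  enough (/ (x + 1) ^ 2 <= / x - / (x + 1)) by lra.
  replace (/ x - / (x + 1)) with (/ (x * (x + 1))) by (field; lra).
  apply Rinv_le_contravar; [nra|]. simpl. nra.
Qed.

Lemma ex_series_inv_sq : ex_series (fun k => / INR (S k) ^ 2).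
Proof.
  apply ex_series_Reals_1, growing_cv.
  - intros n. rewrite tech5.
    assert (0 < / INR (S (S n)) ^ 2) by (apply Rinv_0_lt_compat, pow_lt, lt_0_INR; lia).
    lra.
  - exists 2. intros x [i ->]. assert (Hi := inv_sq_partial_le i).
    assert (0 < / INR (S i)) by (apply Rinv_0_lt_compat, lt_0_INR; lia). lra.
Qed.

Lemma ex_series_eventually_le_inv_sq (f : nat -> R) (K0 : R) (n0 : nat) :
  (forall k, (n0 <= k)%nat -> Rabs (f k) <= K0 * / INR (S k) ^ 2) -> ex_series f.
Proof.
  intros Hf. apply (ex_series_incr_n f n0).
  apply (ex_series_le (fun k => f (n0 + k)%nat) (fun k => K0 * / INR (S (n0 + k)) ^ 2)).
  - intros k. apply Hf. lia.
  - apply (ex_series_incr_n (fun k => K0 * / INR (S k) ^ 2) n0).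
    apply (ex_series_scal_l K0 (fun k => / INR (S k) ^ 2)), ex_series_inv_sq.
Qed.

Lemma Cmod_inv_add_le (w1 w2 : C) (m Q : R) :
  0 < m -> m <= Cmod w1 -> m <= Cmod w2 -> Cmod (w1 + w2) <= Q ->
  Cmod (/ w1 + / w2) <= Q / (m * m).
Proof.
  intros Hm H1 H2 HQ.
  assert (Hw1 : w1 <> 0%C) by (intros E; rewrite E, Cmod_0 in H1; lra).
  assert (Hw2 : w2 <> 0%C) by (intros E; rewrite E, Cmod_0 in H2; lra).
  replace (/ w1 + / w2)%C with ((w1 + w2) * / (w1 * w2))%C by (field; auto).
  rewrite Cmod_mult, Cmod_inv, Cmod_mult by (apply Cmult_neq_0; auto).
  assert (0 <= Cmod (w1 + w2)) by apply Cmod_ge_0.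
  apply Rmult_le_compat; auto.
  - left. apply Rinv_0_lt_compat. nra.
  - apply Rinv_le_contravar; [nra|]. apply Rmult_le_compat; lra.
Qed.

Lemma Rabs_sub_Cmod_le (z : C) (r : R) : Rabs r - Cmod z <= Cmod (z - RtoC r).
Proof.
  assert (H := Cmod_triangle (RtoC r - z) z).
  replace (RtoC r - z + z)%C with (RtoC r) in H by ring.
  replace (z - RtoC r)%C with (- (RtoC r - z))%C by ring.
  rewrite Cmod_opp, <- Cmod_R. lra.
Qed.

Section PairTerm.

Variables (a : Z -> R) (c B : R).
Hypothesis a_growth : forall (n : nat) i, INR n * c - 1 <= a (i + Z.of_nat n)%Z - a i.
Hypothesis a_sym : forall n, Rabs (a n + a (- n)%Z - 2 * a 0%Z) <= B.

(* 1/(z - a_n) + 1/(z - a_(-n)) = (2z - a_n - a_(-n)) / ((z - a_n)(z - a_(-n))):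
   the numerator is bounded by symmetry, each factor of the denominator grows linearly. *)
Lemma Cmod_pair_term_le (z : C) (k : nat) (m : R) :
  0 < m -> m <= INR (S k) * c - 1 - Rabs (a 0%Z) - Cmod z ->
  Cmod (pair_term a z (Z.of_nat (S k))) <= (2 * Cmod z + B + 2 * Rabs (a 0%Z)) / (m * m).
Proof.
  intros Hm Hmk. set (n := Z.of_nat (S k)).
  assert (Hup := a_growth (S k) 0%Z). rewrite Z.add_0_l in Hup. fold n in Hup.
  assert (Hdown := a_growth (S k) (- n)%Z).
  replace (- n + Z.of_nat (S k))%Z with 0%Z in Hdown by lia.
  assert (Ha0 := proj1 (Rabs_le_between _ _) (Rle_refl (Rabs (a 0%Z)))).
  apply Cmod_inv_add_le; [lra| | |].
  - eapply Rle_trans; [|apply Rabs_sub_Cmod_le].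
    assert (Hn := Rle_abs (a n)). lra.
  - eapply Rle_trans; [|apply Rabs_sub_Cmod_le].
    assert (Hn := Rle_abs (- a (- n)%Z)). rewrite Rabs_Ropp in Hn. lra.
  - replace ((z - RtoC (a n)) + (z - RtoC (a (- n)%Z)))%C
      with ((z + z) + - RtoC (a n + a (- n)%Z))%C by (rewrite RtoC_plus; ring).
    eapply Rle_trans; [apply Cmod_triangle|]. rewrite Cmod_opp, Cmod_R.
    assert (Hzz := Cmod_triangle z z).
    assert (Hs := proj1 (Rabs_le_between _ _) (a_sym n)).
    assert (Rabs (a n + a (- n)%Z) <= B + 2 * Rabs (a 0%Z)) by (apply Rabs_le_between; lra).
    lra.
Qed.

Lemma ex_series_pair_term (z : C) :
  0 < c -> ex_series (fun k : nat => Cmod (pair_term a z (Z.of_nat (S k)))).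
Proof.
  intros Hc.
  set (P := 1 + Rabs (a 0%Z) + Cmod z).
  set (Q := 2 * Cmod z + B + 2 * Rabs (a 0%Z)).
  assert (HP : 0 < P).
  { pose proof (Rabs_pos (a 0%Z)). pose proof (Cmod_ge_0 z). unfold P. lra. }
  destruct (INR_unbounded (2 * P / c)) as [n0 Hn0].
  apply (ex_series_eventually_le_inv_sq _ (4 * Q / (c * c)) n0).
  intros k Hk. rewrite Rabs_pos_eq by apply Cmod_ge_0.
  set (x := INR (S k)).
  assert (Hxp : 0 < x) by (apply lt_0_INR; lia).
  assert (HPx : P <= c * x / 2).
  { assert (Hx : 2 * P / c <= x) by (assert (INR n0 <= x) by (apply le_INR; lia); lra).
    apply (Rmult_le_compat_l (c / 2)) in Hx; [|lra].
    replace (c / 2 * (2 * P / c)) with P in Hx by (field; lra). lra. }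
  replace (4 * Q / (c * c) * / x ^ 2) with (Q / ((c * x / 2) * (c * x / 2)))
    by (field; split; lra).
  assert (0 < c * x) by nra.
  apply Cmod_pair_term_le; unfold P in HPx; fold x; lra.
Qed.

End PairTerm.

Lemma Cmod_pair_term_0 (a : Z -> R) (n : Z) : a n <> 0 -> a (- n)%Z <> 0 ->
  Cmod (pair_term a (RtoC 0) n) = Rabs (/ a n + / a (- n)%Z).
Proof.
  intros Hn Hm. unfold pair_term.
  rewrite <- !RtoC_minus, Rminus_0_l, Rminus_0_l.
  rewrite <- !RtoC_inv by (apply Ropp_neq_0_compat; auto).
  rewrite <- RtoC_plus, Cmod_R, <- Rabs_Ropp.
  f_equal. field. auto.
Qed.

Fixpoint psum (g : nat -> R) (K : nat) : R :=
  match K with O => 0 | S K' => psum g K' + g K' end.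

Lemma psum_sum_f_R0 (g : nat -> R) (n : nat) : psum g (S n) = sum_f_R0 g n.
Proof. induction n as [|n IH]; [simpl; ring|]. rewrite tech5, <- IH. simpl. ring. Qed.

Lemma psum_le (g h : nat -> R) (K : nat) : (forall j, g j <= h j) -> psum g K <= psum h K.
Proof. intros H. induction K; simpl; [lra|]. specialize (H K). lra. Qed.

Lemma psum_abs (g : nat -> R) (K : nat) : Rabs (psum g K) <= psum (fun j => Rabs (g j)) K.
Proof.
  induction K; simpl; [rewrite Rabs_R0; lra|].
  eapply Rle_trans; [apply Rabs_triang|]. lra.
Qed.

Lemma psum_minus (g h : nat -> R) (K : nat) : psum g K - psum h K = psum (fun j => g j - h j) K.
Proof. induction K; simpl; [ring|]. rewrite <- IHK. ring. Qed.

Lemma psum_plus (g h : nat -> R) (K : nat) : psum g K + psum h K = psum (fun j => g j + h j) K.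
Proof. induction K; simpl; [ring|]. rewrite <- IHK. ring. Qed.

Lemma psum_eq0 (g : nat -> R) (K : nat) : (forall j, (j < K)%nat -> g j = 0) -> psum g K = 0.
Proof.
  induction K as [|K IH]; intros H; simpl; [auto|].
  rewrite IH, (H K); [ring|lia|]. intros j Hj. apply H. lia.
Qed.

Lemma psum_from (g : nat -> R) (J K : nat) : (J <= K)%nat ->
  psum (fun j => if le_lt_dec J j then g j else 0) K = psum g K - psum g J.
Proof.
  induction 1 as [|K HJK IH].
  - rewrite Rminus_diag. apply psum_eq0. intros j Hj. destruct (le_lt_dec J j); [lia|auto].
  - simpl. rewrite IH. destruct (le_lt_dec J K); [ring|lia].
Qed.

Lemma psum_supported_interval (h : nat -> R) (c : R) (lo w : nat) :
  (forall j, (j < lo \/ lo + w < j)%nat -> h j = 0) -> (forall j, 0 <= h j <= c) ->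
  forall K, psum h K <= c * INR (Nat.min K (lo + S w) - lo).
Proof.
  intros Hout Hbnd K. induction K as [|K IH]; [simpl; lra|]. simpl psum.
  destruct (lt_dec K lo) as [E|E]; [|destruct (lt_dec (lo + w) K) as [E'|E']].
  - rewrite (Hout K (or_introl E)).
    replace (Nat.min (S K) (lo + S w) - lo)%nat with (Nat.min K (lo + S w) - lo)%nat by lia.
    lra.
  - rewrite (Hout K (or_intror E')).
    replace (Nat.min (S K) (lo + S w) - lo)%nat with (Nat.min K (lo + S w) - lo)%nat by lia.
    lra.
  - replace (Nat.min (S K) (lo + S w) - lo)%nat with (S (Nat.min K (lo + S w) - lo)) by lia.
    rewrite S_INR. specialize (Hbnd K). lra.
Qed.

Lemma psum_clustered_le (h : nat -> R) (c : R) (D : nat) :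
  (forall j, 0 <= h j <= c) ->
  (forall j k, h j <> 0 -> h k <> 0 -> (j <= k + D)%nat) ->
  forall K, psum h K <= c * INR (S (2 * D)).
Proof.
  intros Hbnd Hclust K.
  assert (Hc : 0 <= c) by (destruct (Hbnd 0%nat); lra).
  assert (0 <= INR (S (2 * D))) by apply pos_INR.
  destruct (classic (exists e, h e <> 0)) as [[e He]|Hnone].
  - eapply Rle_trans; [apply (psum_supported_interval h c (e - D) (2 * D))|]; auto.
    + intros j Hj. apply NNPP. intros Hj'.
      assert (H1 := Hclust j e Hj' He). assert (H2 := Hclust e j He Hj'). lia.
    + apply Rmult_le_compat_l; auto. apply le_INR. lia.
  - rewrite psum_eq0; [nra|]. intros j _. apply NNPP. intros Hj. eauto.
Qed.

Lemma Series_sub_psum_le (u : nat -> R) (K : nat) :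
  ex_series (fun j => Rabs (u j)) ->
  Rabs (Series u - psum u K) <= Series (fun j => Rabs (u j)) - psum (fun j => Rabs (u j)) K.
Proof.
  intros Habs. assert (Hu : ex_series u) by (apply ex_series_Rabs; auto).
  destruct K as [|m].
  - simpl. rewrite !Rminus_0_r. apply Series_Rabs. auto.
  - rewrite (Series_incr_n u (S m)), (Series_incr_n (fun j => Rabs (u j)) (S m)) by (auto; lia).
    simpl pred. rewrite !psum_sum_f_R0.
    replace (sum_f_R0 u m + Series (fun k => u (S m + k)%nat) - sum_f_R0 u m)
      with (Series (fun k => u (S m + k)%nat)) by ring.
    replace (sum_f_R0 (fun j => Rabs (u j)) m + Series (fun k => Rabs (u (S m + k)%nat))
             - sum_f_R0 (fun j => Rabs (u j)) m)
      with (Series (fun k => Rabs (u (S m + k)%nat))) by ring.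
    apply Series_Rabs. apply (ex_series_incr_n (fun j => Rabs (u j)) (S m)). auto.
Qed.

Lemma Series_sub_psum_small (U : nat -> R) :
  ex_series U -> forall d, 0 < d -> exists J, Series U - psum U J < d.
Proof.
  intros HU d Hd. assert (H := Series_correct U HU). apply is_series_Reals in H.
  destruct (H d Hd) as [N HN]. exists (S N). rewrite psum_sum_f_R0.
  specialize (HN N (le_n N)). unfold Rdist in HN. rewrite Rabs_minus_sym in HN.
  apply Rabs_def2 in HN. lra.
Qed.

Definition trunc_recip (a : Z -> R) (N : R) (n : Z) : R :=
  if Rlt_dec (Rabs (a n)) N then / a n else 0.

Definition recip_pair (a : Z -> R) (j : nat) : R :=
  / a (Z.of_nat (S j)) + / a (- Z.of_nat (S j))%Z.

Lemma sum_f_R0_symmetric (F : Z -> R) (K : nat) :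
  sum_f_R0 (fun i => F (Z.of_nat i - Z.of_nat K)%Z) (2 * K) =
  F 0%Z + psum (fun j => F (Z.of_nat (S j)) + F (- Z.of_nat (S j))%Z) K.
Proof.
  induction K as [|K IH]; [simpl; ring|].
  replace (2 * S K)%nat with (S (S (2 * K))) by lia.
  rewrite decomp_sum by lia. simpl pred. rewrite tech5.
  rewrite (sum_eq _ (fun i => F (Z.of_nat i - Z.of_nat K)%Z)) by (intros i _; f_equal; lia).
  replace (S (2 * K) - 1)%nat with (2 * K)%nat by lia.
  change (K + (K + 0))%nat with (2 * K)%nat.
  rewrite IH. cbn [psum].
  replace (Z.of_nat 0 - Z.of_nat (S K))%Z with (- Z.of_nat (S K))%Z by lia.
  replace (Z.of_nat (S (S (2 * K))) - Z.of_nat (S K))%Z with (Z.of_nat (S K)) by lia.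
  ring.
Qed.

Lemma window_sum_pairs (a : Z -> R) (N : R) (K : nat) :
  window_sum a N K = trunc_recip a N 0%Z +
    psum (fun j => trunc_recip a N (Z.of_nat (S j)) + trunc_recip a N (- Z.of_nat (S j))%Z) K.
Proof. exact (sum_f_R0_symmetric (trunc_recip a N) K). Qed.

Section WindowSums.

Variable a : Z -> R.
Hypothesis a_nondecr : forall n, a n <= a (n + 1)%Z.
Variable B : R.
Hypothesis a_sym : forall n, Rabs (a n + a (- n)%Z - 2 * a 0%Z) <= B.

Lemma unpaired_near_level (N : R) (n : Z) :
  (0 <= n)%Z -> Rabs (a 0%Z) < N ->
  (Rabs (a n) < N /\ N <= Rabs (a (- n)%Z)) \/ (N <= Rabs (a n) /\ Rabs (a (- n)%Z) < N) ->
  Rabs (a n - N) <= B + 2 * Rabs (a 0%Z).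
Proof.
  intros Hn H0 Hone.
  assert (M1 := nondecr_le a a_nondecr 0%Z n Hn).
  assert (M2 := nondecr_le a a_nondecr (- n)%Z 0%Z ltac:(lia)).
  assert (Hs := proj1 (Rabs_le_between _ _) (a_sym n)).
  assert (Ha0 := proj1 (Rabs_le_between _ _) (Rle_refl (Rabs (a 0%Z)))).
  apply Rabs_lt_between in H0. apply Rabs_le_between.
  destruct Hone as [[H1 H2] | [H1 H2]].
  - apply Rabs_lt_between in H1.
    assert (a (- n)%Z <= - N) by (revert H2; unfold Rabs; destruct Rcase_abs; lra). lra.
  - apply Rabs_lt_between in H2.
    assert (N <= a n) by (revert H1; unfold Rabs; destruct Rcase_abs; lra). lra.
Qed.

Definition boundary_weight (N : R) (j : nat) : R :=
  if Rle_dec (Rabs (a (Z.of_nat (S j)) - N)) (B + 2 * Rabs (a 0%Z)) then / N else 0.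

Lemma boundary_weight_psum_le (C3 : nat) (N : R) (K : nat) :
  (forall i j, Rabs (a j - a i) <= 2 * (B + 2 * Rabs (a 0%Z)) -> (Z.abs (j - i) <= Z.of_nat C3)%Z) ->
  0 < N -> psum (boundary_weight N) K <= / N * INR (S (2 * C3)).
Proof.
  intros HC3 HN. apply psum_clustered_le.
  - assert (0 < / N) by (apply Rinv_0_lt_compat; auto).
    intros j. unfold boundary_weight. destruct Rle_dec; lra.
  - intros j k Hj Hk. unfold boundary_weight in Hj, Hk.
    destruct Rle_dec as [Ej|]; [|contradiction]. destruct Rle_dec as [Ek|]; [|contradiction].
    apply Rabs_le_between in Ej, Ek.
    enough (Z.abs (Z.of_nat (S j) - Z.of_nat (S k)) <= Z.of_nat C3)%Z by lia.
    apply HC3. apply Rabs_le_between. lra.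
Qed.

Lemma trunc_pair_error_le (N : R) (J0 j : nat) :
  0 < N -> (forall m, (Z.abs m <= Z.of_nat J0)%Z -> Rabs (a m) < N) ->
  Rabs (trunc_recip a N (Z.of_nat (S j)) + trunc_recip a N (- Z.of_nat (S j))%Z - recip_pair a j)
  <= (if le_lt_dec J0 j then Rabs (recip_pair a j) else 0) + boundary_weight N j.
Proof.
  intros HN Hinner.
  assert (H0 := Hinner 0%Z ltac:(lia)).
  assert (HNinv : 0 < / N) by (apply Rinv_0_lt_compat; auto).
  assert (Hfar : forall x, ~ Rabs x < N -> Rabs (/ x) <= / N).
  { intros x Hx. apply Rnot_lt_le in Hx. rewrite Rabs_inv. apply Rinv_le_contravar; auto. }
  assert (He : 0 <= if le_lt_dec J0 j then Rabs (recip_pair a j) else 0).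
  { destruct le_lt_dec; [apply Rabs_pos|lra]. }
  assert (Hh : 0 <= boundary_weight N j) by (unfold boundary_weight; destruct Rle_dec; lra).
  unfold trunc_recip, recip_pair, boundary_weight in *. set (n := Z.of_nat (S j)) in *.
  destruct (Rlt_dec (Rabs (a n)) N) as [Hp|Hp];
  destruct (Rlt_dec (Rabs (a (- n)%Z)) N) as [Hm|Hm].
  - replace (/ a n + / a (- n)%Z - (/ a n + / a (- n)%Z)) with 0 by ring.
    rewrite Rabs_R0. lra.
  - assert (Hband := unpaired_near_level N n ltac:(lia) H0
                       (or_introl (conj Hp (Rnot_lt_le _ _ Hm)))).
    destruct Rle_dec; [|contradiction].
    replace (/ a n + 0 - (/ a n + / a (- n)%Z)) with (- / a (- n)%Z) by ring.
    rewrite Rabs_Ropp. assert (Hfar' := Hfar _ Hm). lra.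
  - assert (Hband := unpaired_near_level N n ltac:(lia) H0
                       (or_intror (conj (Rnot_lt_le _ _ Hp) Hm))).
    destruct Rle_dec; [|contradiction].
    replace (0 + / a (- n)%Z - (/ a n + / a (- n)%Z)) with (- / a n) by ring.
    rewrite Rabs_Ropp. assert (Hfar' := Hfar _ Hp). lra.
  - destruct le_lt_dec as [_|Hj]; [|exfalso; apply Hp, Hinner; lia].
    replace (0 + 0 - (/ a n + / a (- n)%Z)) with (- (/ a n + / a (- n)%Z)) by ring.
    rewrite Rabs_Ropp. lra.
Qed.

Lemma window_sum_converges (C3 : nat) :
  (forall i j, Rabs (a j - a i) <= 2 * (B + 2 * Rabs (a 0%Z)) -> (Z.abs (j - i) <= Z.of_nat C3)%Z) ->
  ex_series (fun j => Rabs (recip_pair a j)) ->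
  exists alpha0 : R, forall eps : R, 0 < eps ->
    exists N0 : R, forall N s : R, N0 <= N -> recip_sum_is a N s -> Rabs (s - alpha0) < eps.
Proof.
  intros HC3 Habs.
  set (u := recip_pair a). set (U := fun j => Rabs (u j)).
  exists (/ a 0%Z + Series u). intros eps Heps.
  destruct (Series_sub_psum_small U Habs (eps / 2) ltac:(lra)) as [J0 HJ0].
  set (X := INR (S (2 * C3))).
  exists (Rmax (Rmax (Rabs (a (- Z.of_nat J0)%Z)) (Rabs (a (Z.of_nat J0))) + 1)
               (2 * X / eps + 1)).
  intros N s HN [K [Hcover ->]].
  assert (HN1 := Rle_trans _ _ _ (Rmax_l _ _) HN).
  assert (HN2 := Rle_trans _ _ _ (Rmax_r _ _) HN).
  assert (Hinner : forall m, (Z.abs m <= Z.of_nat J0)%Z -> Rabs (a m) < N).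
  { intros m Hm.
    assert (Rabs (a m) <= Rmax (Rabs (a (- Z.of_nat J0)%Z)) (Rabs (a (Z.of_nat J0))))
      by (apply RmaxAbs; apply nondecr_le; auto; lia).
    lra. }
  assert (HNpos : 0 < N) by (pose proof (Hinner 0%Z ltac:(lia)); pose proof (Rabs_pos (a 0%Z)); lra).
  assert (HJK : (J0 <= K)%nat).
  { assert (Hc := Hcover (Z.of_nat J0) (Hinner (Z.of_nat J0) ltac:(lia))). lia. }
  assert (Hboundary : psum (boundary_weight N) K < eps / 2).
  { eapply Rle_lt_trans; [apply (boundary_weight_psum_le C3 N K HC3 HNpos)|]. fold X.
    apply (Rmult_le_compat_l (eps / 2)) in HN2; [|lra].
    replace (eps / 2 * (2 * X / eps + 1)) with (X + eps / 2) in HN2 by (field; lra).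
    apply (Rmult_lt_reg_l N); [lra|]. rewrite <- Rmult_assoc, Rinv_r, Rmult_1_l by lra. lra. }
  assert (Hdiff : Rabs (psum (fun j => trunc_recip a N (Z.of_nat (S j))
                                       + trunc_recip a N (- Z.of_nat (S j))%Z) K - psum u K)
                  <= psum (fun j => if le_lt_dec J0 j then U j else 0) K
                     + psum (boundary_weight N) K).
  { rewrite psum_minus, psum_plus. eapply Rle_trans; [apply psum_abs|].
    apply psum_le. intros j. apply (trunc_pair_error_le N J0 j HNpos Hinner). }
  rewrite psum_from in Hdiff by auto.
  assert (Htail := Series_sub_psum_le u K Habs). fold U in Htail.
  rewrite window_sum_pairs. unfold trunc_recip at 1.
  destruct Rlt_dec as [_|Hout]; [|exfalso; apply Hout, Hinner; lia].
  match goal with |- Rabs (?F0 + ?V - (_ + ?S)) < _ =>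
    replace (F0 + V - (F0 + S)) with ((V - psum u K) - (S - psum u K)) by ring end.
  eapply Rle_lt_trans; [apply Rabs_triang|]. rewrite Rabs_Ropp. lra.
Qed.

End WindowSums.

Theorem corollary1 (a : Z -> R)
  (hAP : almost_periodic_set a)
  (h0 : forall n : Z, a n <> 0)
  (hmono : forall n : Z, a n <= a (n + 1)%Z) :
  (exists alpha0 : R,
     forall eps : R, 0 < eps ->
       exists N0 : R, forall N s : R, N0 <= N -> recip_sum_is a N s ->
         Rabs (s - alpha0) < eps)
  /\
  (forall z : C, (forall n : Z, z <> RtoC (a n)) ->
     ex_series (fun k : nat => Cmod (pair_term a z (Z.of_nat (S k))))).
Proof.
  assert (a_lf : locally_finite a) by apply hAP.
  destruct (unit_periods_dense_of_ap a hAP) as [L HL].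
  destruct (symmetric_deviation_bounded a hmono L a_lf HL) as [B Hsym].
  destruct (linear_growth_rate a hmono L a_lf HL) as [c [Hc Hgrowth]].
  (* Convergence only depends on large k, where z - a_k and z - a_(-k) are nonzero anyway. *)
  assert (Hpair : forall z, ex_series (fun k => Cmod (pair_term a z (Z.of_nat (S k)))))
    by (intros z; exact (ex_series_pair_term a c B Hgrowth Hsym z Hc)).
  split; [|intros z _; apply Hpair].
  destruct (index_dist_bounded a hmono L a_lf HL (2 * (B + 2 * Rabs (a 0%Z)))) as [C3 HC3].
  apply (window_sum_converges a hmono B Hsym C3 HC3).
  apply (ex_series_ext (fun k => Cmod (pair_term a (RtoC 0) (Z.of_nat (S k))))); [|apply Hpair].
  intros k. apply Cmod_pair_term_0; auto.
Qed.
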